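(* Let $N\ge2$, $p\ge1$, and suppose $f_n\rightarrowtail f$ in $L^p(\mathbb T^N)$. For $1\le j\le N-1$ and $g\in L^1(\mathbb T^N)$ define $\hat g\in L^1(\mathbb T^{N-j})$ by $\hat g(t_{j+1},\dots,t_N)=\int_{\mathbb T^j}g(\cdot,t_{j+1},\dots,t_N)\,d\mu_j$. Then, for each $j=1,\dots,N-1$, $\hat f_n\rightarrowtail\hat f$ in $L^p(\mathbb T^{N-j})$.
   Context: $\mathbb T$ is the unit circle and $\mu_j$ the normalized Lebesgue measure on $\mathbb T^j$. For $M\ge1$, a sequence $f_n\in L^2(\mathbb T^M)$ converges to $f\in L^p(\mathbb T^M)$ ($p\ge1$) ''restricted to hyperplanes'', written $f_n\rightarrowtail f$ in $L^p(\mathbb T^M)$, if $f_n\to f$ in $L^p(\mathbb T^M)$ and, for each $l=2,\dots,M$ and a.e. $(t_l,\dots,t_M)\in\mathbb T^{M-l+1}$, $f_n(\cdot,t_l,\dots,t_M)\to f(\cdot,t_l,\dots,t_M)$ in $L^p(\mathbb T^{l-1})$ as functions of the first $l-1$ variables. *)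

From HB Require Import structures.
From mathcomp Require Import all_boot all_order all_algebra.
From mathcomp Require Import all_classical all_reals all_analysis.
From mathcomp.real_closed Require Import complex.

Set Implicit Arguments.
Unset Strict Implicit.
Unset Printing Implicit Defensive.

Import Order.TTheory GRing.Theory Num.Theory.
Local Open Scope ring_scope.
Local Open Scope classical_set_scope.

(* The torus T^M.  The circle T is parametrized by the angle t/(2pi)   *)
(* in [0,1]; its normalized Lebesgue measure mu_1 is the uniform       *)
(* probability on [0,1].  T^M is built as nested pairs                 *)
(* so a point of T^M is (t_1, (t_2, ..., (t_M, tt))), and mu_M is the   *)
(* (iterated) product measure mu_1 \x mu_(M-1), with mu_0 = dirac tt.   *)

Fixpoint torus_sig (R : realType) (M : nat) : {d : measure_display & measurableType d} :=
  match M with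
  | 0 => existT _ _ (unit : measurableType _)
  | M'.+1 => existT _ _ ((measurableTypeR R * projT2 (torus_sig R M'))%type : measurableType _)
  end.

Definition torus (R : realType) (M : nat) : measurableType (projT1 (torus_sig R M)) :=
  projT2 (torus_sig R M).

Definition mu1 (R : realType) : probability (measurableTypeR R) R :=
  uniform_prob (@ltr01 R).

Fixpoint torus_measure (R : realType) (M : nat)
  : probability (torus R M) R :=
  match M as M0 return probability (torus R M0) R with
  | 0 => @dirac _ unit tt R
  | M'.+1 => (@mu1 R \x torus_measure R M')%E
  end.

Fixpoint tjoin (R : realType) (a b : nat) : torus R a -> torus R b -> torus R (a + b) :=
  match a as a0 return torus R a0 -> torus R b -> torus R (a0 + b) with
  | 0 => fun _ y => y
  | a'.+1 => fun x y => (x.1, @tjoin R a' b x.2 y)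
  end.

Definition tcast (R : realType) (m n : nat) (e : m = n) (x : torus R m) : torus R n :=
  eq_rect m (fun k => torus R k) x n e.

Definition cmod (R : realType) (z : R[i]) : R := Num.sqrt (complex.Re z ^+ 2 + complex.Im z ^+ 2).

Definition cmeasurable d (T : measurableType d) (R : realType) (g : T -> R[i]) :=
  measurable_fun setT (fun x => complex.Re (g x)) /\ measurable_fun setT (fun x => complex.Im (g x)).

Definition cLnorm d (T : measurableType d) (R : realType)
  (mu : {measure set T -> \bar R}) (p : R) (g : T -> R[i]) : \bar R :=
  Lnorm mu p%:E (fun x => (cmod (g x))%:E).

Definition inLp d (T : measurableType d) (R : realType)
  (mu : {measure set T -> \bar R}) (p : R) (g : T -> R[i]) : Prop :=
  cmeasurable g /\ (cLnorm mu p g < +oo)%E.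

Definition Lp_cvg d (T : measurableType d) (R : realType)
  (mu : {measure set T -> \bar R}) (p : R) (g_ : nat -> T -> R[i]) (g : T -> R[i]) : Prop :=
  (fun n => cLnorm mu p (fun x => g_ n x - g x)) @ \oo --> 0%E.

Definition cintegral d (T : measurableType d) (R : realType)
  (mu : {measure set T -> \bar R}) (g : T -> R[i]) : R[i] :=
  (Rintegral mu setT (fun x => complex.Re (g x)) +i* Rintegral mu setT (fun x => complex.Im (g x)))%C.

(* Convergence restricted to hyperplanes:  f_n >-> f  in L^p(T^M).      *)
(* For l = 2..M write a = l-1 (number of free variables, 1 <= a <= M-1) *)
(* and b = M-l+1 (number of fixed variables t_l..t_M, b >= 1).          *)

Definition restr_cvg (R : realType) (M : nat) (p : R)
  (f_ : nat -> torus R M -> R[i]) (f : torus R M -> R[i]) : Prop :=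
  [/\ forall n, inLp (torus_measure R M) 2 (f_ n),
      inLp (torus_measure R M) p f,
      Lp_cvg (torus_measure R M) p f_ f &
      forall (a b : nat) (e : (a + b)%N = M), (1 <= a)%N -> (1 <= b)%N ->
        {ae torus_measure R b, forall t : torus R b,
          Lp_cvg (torus_measure R a) p
            (fun n x => f_ n (tcast e (tjoin x t)))
            (fun x => f (tcast e (tjoin x t)))}].

Definition hat (R : realType) (j k : nat) (g : torus R (j + k) -> R[i]) : torus R k -> R[i] :=
  fun t => cintegral (torus_measure R j) (fun x => g (tjoin x t)).

From Pilot Require Import Defs.
From HB Require Import structures.
From mathcomp Require Import all_boot all_order all_algebra.
From mathcomp Require Import all_classical all_reals all_analysis.
From mathcomp Require Import measurable_realfun.
From mathcomp.real_closed Require Import complex.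

(* Averaging out the first j variables, g |-> hat g, is bounded from
   L^p(T^(j+k)) to L^p(T^k): pointwise |hat g t| <= 2 ||g(., t)||_1
   <= 2 ||g(., t)||_p (real and imaginary parts separately, then Hoelder on the
   probability space T^j), and Tonelli integrates the p-th powers over t, so
   ||hat g||_p <= 2 ||g||_p.  As the sections of an integrable function are a.e.
   integrable, hat is linear up to null sets, so it preserves L^p convergence.
   Fixing the last b variables of hat g to s amounts to averaging out the first
   j variables of g with the same s fixed, a function on T^(j+a); the
   hypothesis on f_n along these larger hyperplanes gives the claim. *)

Set Implicit Arguments.
Unset Strict Implicit.
Unset Printing Implicit Defensive.

Import Order.TTheory GRing.Theory Num.Theory.
Local Open Scope ring_scope.
Local Open Scope classical_set_scope.

Section complex_modulus.
Variable R : realType.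
Implicit Types z w : R[i].

Lemma cmod_ge0 z : 0 <= cmod z.
Proof. exact: sqrtr_ge0. Qed.

Lemma normRe_le_cmod z : `|complex.Re z| <= cmod z.
Proof. by rewrite /cmod -sqrtr_sqr ler_sqrt ?lerDl ?addr_ge0 ?sqr_ge0. Qed.

Lemma normIm_le_cmod z : `|complex.Im z| <= cmod z.
Proof. by rewrite /cmod -sqrtr_sqr ler_sqrt ?lerDr ?addr_ge0 ?sqr_ge0. Qed.

Lemma cmod_le_normRe_normIm z : cmod z <= `|complex.Re z| + `|complex.Im z|.
Proof.
rewrite /cmod -[X in _ <= X]ger0_norm ?addr_ge0 // -sqrtr_sqr ler_sqrt ?sqr_ge0 //.
rewrite -[complex.Re z ^+ 2]real_normK ?num_real //.
rewrite -[complex.Im z ^+ 2]real_normK ?num_real //.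
by rewrite sqrrD lerD2r lerDl mulrn_wge0 ?mulr_ge0.
Qed.

Lemma ReB z w : complex.Re (z - w) = complex.Re z - complex.Re w.
Proof. by case: z; case: w. Qed.

Lemma ImB z w : complex.Im (z - w) = complex.Im z - complex.Im w.
Proof. by case: z; case: w. Qed.

End complex_modulus.

Section complex_measurable.
Context d d' (T : measurableType d) (U : measurableType d') (R : realType).
Implicit Types g h : T -> R[i].

Lemma measurable_cmod g : cmeasurable g -> measurable_fun setT (fun x => cmod (g x)).
Proof.
move=> [mr mi]; apply: measurableT_comp (continuous_measurable_fun (@sqrt_continuous R)) _.
by apply: measurable_funD; apply: measurable_funX.
Qed.

Lemma cmeasurableB g h : cmeasurable g -> cmeasurable h -> cmeasurable (fun x => g x - h x).
Proof.
move=> [gr gi] [hr hi]; split.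
- under eq_fun do rewrite ReB; exact: measurable_funB.
- under eq_fun do rewrite ImB; exact: measurable_funB.
Qed.

Lemma cmeasurable_comp (g : U -> R[i]) (h : T -> U) :
  cmeasurable g -> measurable_fun setT h -> cmeasurable (fun x => g (h x)).
Proof.
by move=> [gr gi] mh; split; [exact: measurableT_comp gr mh|exact: measurableT_comp gi mh].
Qed.

End complex_measurable.

Section complex_integral.
Context d (T : measurableType d) (R : realType).
Variable mu : {measure set T -> \bar R}.
Implicit Types g h : T -> R[i].
Local Open Scope ereal_scope.

Lemma measurable_cmod_poweR g (p : R) : cmeasurable g ->
  measurable_fun setT (fun x => `|(cmod (g x))%:E| `^ p).
Proof.
move=> mg; apply: measurableT_comp (measurable_poweR p) _.
by apply: measurableT_comp => //; apply/measurable_EFinP; exact: measurable_cmod.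
Qed.

Lemma abs_Rintegral_le (f : T -> R) : measurable_fun setT f ->
  (`|Rintegral mu setT f|)%:E <= \int[mu]_x (`|f x|)%:E.
Proof.
move=> mf; rewrite /Rintegral.
have [fin|nfin] := boolP (\int[mu]_(x in setT) (f x)%:E \is a fin_num).
  rewrite -fine_abse // fineK ?abse_fin_num //.
  by apply: (le_abse_integral mu measurableT); exact/measurable_EFinP.
have -> : fine (\int[mu]_(x in setT) (f x)%:E) = 0%R.
  by move: nfin; case: (\int[mu]_(x in _) _).
by rewrite normr0; apply: integral_ge0 => x _; rewrite lee_fin.
Qed.

Lemma cmod_cintegral_le g : cmeasurable g ->
  (cmod (cintegral mu g))%:E <= 2%:E * \int[mu]_x (cmod (g x))%:E.
Proof.
move=> mg; have [gr gi] := mg; set I := \int[mu]_x _.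
have part (u : T -> R) : measurable_fun setT u -> (forall x, `|u x| <= cmod (g x))%R ->
    (`|Rintegral mu setT u|)%:E <= I.
  move=> mu_ ug; apply: le_trans (abs_Rintegral_le mu_) _.
  apply: ge0_le_integral => //.
  - by apply/measurable_EFinP; exact: measurableT_comp mu_.
  - by apply/measurable_EFinP; exact: measurable_cmod.
  - by move=> x _; rewrite lee_fin.
set z := cintegral mu g.
apply: le_trans (_ : (`|complex.Re z| + `|complex.Im z|)%:E <= _).
  by rewrite lee_fin cmod_le_normRe_normIm.
rewrite EFinD (_ : 2%:E = 1 + 1) // ge0_muleDl ?mul1e //.
by apply: leeD; apply: part => // x; [exact: normRe_le_cmod|exact: normIm_le_cmod].
Qed.

Lemma integrable_ReIm g : cmeasurable g -> \int[mu]_x (cmod (g x))%:E < +oo ->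
  mu.-integrable setT (EFin \o (fun x => complex.Re (g x))) /\
  mu.-integrable setT (EFin \o (fun x => complex.Im (g x))).
Proof.
move=> mg fin; have [gr gi] := mg.
have part (u : T -> R) : measurable_fun setT u -> (forall x, `|u x| <= cmod (g x))%R ->
    mu.-integrable setT (EFin \o u).
  move=> mu_ ug; apply/integrableP; split; first exact/measurable_EFinP.
  apply: le_lt_trans fin; apply: ge0_le_integral => //.
  - by apply: measurableT_comp => //; exact/measurable_EFinP.
  - by apply/measurable_EFinP; exact: measurable_cmod.
  - by move=> x _; rewrite lee_fin.
by split; apply: part => // x; [exact: normRe_le_cmod|exact: normIm_le_cmod].
Qed.

Lemma cintegralB g h : cmeasurable g -> cmeasurable h ->
  \int[mu]_x (cmod (g x))%:E < +oo -> \int[mu]_x (cmod (h x))%:E < +oo ->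
  cintegral mu (fun x => g x - h x)%R = (cintegral mu g - cintegral mu h)%R.
Proof.
move=> mg mh fg fh.
have [gr gi] := integrable_ReIm mg fg; have [hr hi] := integrable_ReIm mh fh.
apply/eqP; rewrite eq_complex ReB ImB /cintegral /= -!RintegralB //.
by apply/andP; split; apply/eqP; apply: eq_Rintegral => x _; rewrite ?ReB ?ImB.
Qed.

Lemma ae_lty_integral (F : T -> \bar R) : measurable_fun setT F -> (forall x, 0 <= F x) ->
  \int[mu]_x F x < +oo -> {ae mu, forall x, F x < +oo}.
Proof.
move=> mF F0 Ffin.
have iF : mu.-integrable setT F.
  by apply/integrableP; split => //; under eq_integral do rewrite gee0_abs //.
by apply: filterS (integrable_ae measurableT iF) => x /(_ I); rewrite ge0_fin_numE.
Qed.

Lemma ae_eq_cLnorm p g h : cmeasurable g -> cmeasurable h ->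
  {ae mu, forall x, g x = h x} -> cLnorm mu p g = cLnorm mu p h.
Proof.
move=> mg mh gh; rewrite /cLnorm unlock.
rewrite (@ae_eq_integral _ _ _ mu setT (fun x => `|(cmod (h x))%:E| `^ p)
  (fun x => `|(cmod (g x))%:E| `^ p)) //;
  [exact: measurable_cmod_poweR|exact: measurable_cmod_poweR|].
by apply: filterS gh => x /= -> _.
Qed.

End complex_integral.

Section probability_Lnorm.
Context d (T : measurableType d) (R : realType).
Variable P : probability T R.
Local Open Scope ereal_scope.

Lemma Lnorm1_le_Lnorm (f : T -> R) (p : R) : measurable_fun setT f -> (1 <= p)%R ->
  'N[P]_1[EFin \o f] <= 'N[P]_p%:E[EFin \o f].
Proof.
move=> mf p1; have [->//|pn1] := eqVneq p 1%R.
have p1' : (1 < p)%R by rewrite lt_neqAle eq_sym pn1.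
have p0 : (0 < p)%R by rewrite (lt_trans ltr01).
pose q := (1 - p^-1)^-1%R.
have q0 : (0 < q)%R by rewrite /q invr_gt0 subr_gt0 invf_lt1.
have pq : (p^-1 + q^-1 = 1)%R by rewrite /q invrK addrC subrK.
have := @hoelder _ _ _ P f (cst 1%R) p q mf (measurable_cst _) p0 q0 pq.
have PT : P [set: T] `^ q^-1 = 1 by rewrite probability_setT poweR1r.
rewrite Lnorm_cst1 PT mule1.
by rewrite (_ : (f \* cst 1)%R = f) //; apply/funext => x /=; rewrite mulr1.
Qed.

Lemma cmod_cintegral_le_cLnorm p (g : T -> R[i]) : (1 <= p)%R -> cmeasurable g ->
  (cmod (cintegral P g))%:E <= 2%:E * cLnorm P p g.
Proof.
move=> p1 mg; apply: le_trans (cmod_cintegral_le P mg) _.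
rewrite lee_pmul2l ?lte_fin //; apply: le_trans (Lnorm1_le_Lnorm (measurable_cmod mg) p1).
rewrite Lnorm1; apply: ge0_le_integral => //.
- by move=> x _; rewrite lee_fin cmod_ge0.
- by apply/measurable_EFinP; exact: measurable_cmod.
- by apply: measurableT_comp => //; apply/measurable_EFinP; exact: measurable_cmod.
- by move=> x _ /=; rewrite lee_fin ler_norm.
Qed.

Lemma integral_cmod_lty p (g : T -> R[i]) : (1 <= p)%R -> inLp P p g ->
  \int[P]_x (cmod (g x))%:E < +oo.
Proof.
move=> p1 [mg gfin]; have := le_lt_trans (Lnorm1_le_Lnorm (measurable_cmod mg) p1) gfin.
rewrite Lnorm1; congr (_ < _); apply: eq_integral => x _ /=.
by rewrite ger0_norm ?cmod_ge0.
Qed.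

End probability_Lnorm.

Lemma ge0_lee_poweR (R : realType) (r : R) (x y : \bar R) :
  (0 <= r)%R -> (0 <= x)%E -> (x <= y)%E -> (x `^ r <= y `^ r)%E.
Proof.
move=> r0 x0 xy; apply: gt0_ler_poweR => //;
  by rewrite in_itv /= leey andbT // (le_trans x0 xy).
Qed.

Section cLnorm_comparison.
Context d d' (T : measurableType d) (T' : measurableType d') (R : realType).
Variables (mu : {measure set T -> \bar R}) (mu' : {measure set T' -> \bar R}).
Local Open Scope ereal_scope.

Lemma cLnorm_le_of_integral_powR (p c : R) (g : T -> R[i]) (h : T' -> R[i]) :
  (0 < p)%R -> (0 <= c)%R ->
  \int[mu]_x `|(cmod (g x))%:E| `^ p <= c%:E `^ p * \int[mu']_y `|(cmod (h y))%:E| `^ p ->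
  cLnorm mu p g <= c%:E * cLnorm mu' p h.
Proof.
move=> p0 c0 gh; rewrite /cLnorm unlock /Lnorm.
have I0 (e : measurableType _) (m : {measure set e -> \bar R}) (u : e -> R[i]) :
    0 <= \int[m]_x `|(cmod (u x))%:E| `^ p by apply: integral_ge0 => x _; exact: poweR_ge0.
apply: le_trans (ge0_lee_poweR _ (I0 _ _ mu g) gh) _; first by rewrite invr_ge0 ltW.
by rewrite poweRM ?poweR_ge0 ?I0 // -poweRrM mulfV ?gt_eqF // poweRe1 ?lee_fin.
Qed.

Lemma Lp_cvg_of_cLnorm_le (p c : R) (g_ : nat -> T -> R[i]) g (h_ : nat -> T' -> R[i]) h :
  (forall n, cLnorm mu p (fun x => g_ n x - g x)%R <=
    c%:E * cLnorm mu' p (fun y => h_ n y - h y)%R) ->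
  Lp_cvg mu' p h_ h -> Lp_cvg mu p g_ g.
Proof.
move=> gh hcvg.
apply: (@squeeze_cvge _ _ _ _ (cst 0) _
  (fun n => c%:E * cLnorm mu' p (fun y => h_ n y - h y)%R)).
- by apply: nearW => n; rewrite gh andbT; exact: Lnorm_ge0.
- exact: cvg_cst.
- by rewrite -(mule0 c%:E); exact: cvgeZl.
Qed.

End cLnorm_comparison.

Section section_integral.
Context d1 d2 (T1 : measurableType d1) (T2 : measurableType d2) (R : realType).
Variable m1 : {sigma_finite_measure set T1 -> \bar R}.
Local Open Scope ereal_scope.

Lemma measurable_Rintegral_section (u : T1 * T2 -> R) : measurable_fun setT u ->
  measurable_fun setT (fun y => Rintegral m1 setT (fun x => u (x, y))).
Proof.
move=> mu_; have mue : measurable_fun setT (EFin \o u) by exact/measurable_EFinP.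
rewrite (_ : (fun y => _) = fun y =>
    fine (fubini_G m1 (EFin \o u)^\+ y - fubini_G m1 (EFin \o u)^\- y)); last first.
  apply/funext => y; rewrite /Rintegral integralE /fubini_G.
  by congr (fine (_ - _)); apply: eq_integral => x _; rewrite ?funeposE ?funenegE.
apply: measurableT_comp (fine_measurable measurableT) _.
apply: emeasurable_funB; apply: measurable_fun_fubini_tonelli_G.
- exact: measurable_funepos.
- by move=> z; exact: funepos_ge0.
- exact: measurable_funeneg.
- by move=> z; exact: funeneg_ge0.
Qed.

End section_integral.

Section torus.
Variable R : realType.
Local Open Scope ereal_scope.

Lemma measurable_tjoin a b :
  measurable_fun setT (fun z : torus R a * torus R b => tjoin z.1 z.2).
Proof.
elim: a => [|a IH] /=; first exact: measurable_snd.
apply: measurable_fun_pair; first exact: measurableT_comp measurable_fst measurable_fst.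
have m12 : measurable_fun setT (fun x : torus R a.+1 * torus R b => (x.1.2, x.2)).
  apply: measurable_fun_pair; last exact: measurable_snd.
  exact: measurableT_comp measurable_snd measurable_fst.
exact: measurableT_comp IH m12.
Qed.

Lemma measurable_tjoinl a b (t : torus R b) :
  measurable_fun setT (fun x : torus R a => tjoin x t).
Proof. exact: measurableT_comp (@measurable_tjoin a b) (pair2_measurable t). Qed.

Lemma measurable_tcast m n (e : m = n) : measurable_fun setT (@Defs.tcast R m n e).
Proof. by case: n / e; exact: measurable_id. Qed.

Lemma integral_tcast m n (e : m = n) (h : torus R n -> \bar R) :
  \int[torus_measure R n]_w h w = \int[torus_measure R m]_z h (Defs.tcast e z).
Proof. by case: n / e h. Qed.

Lemma tcast_pair m n (e : m.+1 = n.+1) (u : R) (v : torus R m) :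
  @Defs.tcast R m.+1 n.+1 e (u, v) = (u, Defs.tcast (succn_inj e) v).
Proof.
have E := succn_inj e; subst n.
have -> : succn_inj e = erefl by exact: eq_irrelevance.
by have -> : e = erefl by exact: eq_irrelevance.
Qed.

Lemma tjoinA j a b (e : (j + a + b = j + (a + b))%N)
    (x : torus R j) (y : torus R a) (s : torus R b) :
  tjoin x (tjoin y s) = Defs.tcast e (tjoin (tjoin x y) s).
Proof.
elim: j e x => [|j IH] e x /=.
  by have -> : e = erefl by exact: eq_irrelevance.
by case: x => x1 x2; rewrite tcast_pair -IH.
Qed.

Lemma tjoin_tcast j a b k (e : (a + b = k)%N) (e' : (j + a + b = j + k)%N)
    (x : torus R j) (y : torus R a) (s : torus R b) :
  tjoin x (Defs.tcast e (tjoin y s)) = Defs.tcast e' (tjoin (tjoin x y) s).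
Proof. by move: e'; case: k / e => e'; exact: tjoinA. Qed.

Lemma tonelli_tjoin1 j k (h : torus R (j + k) -> \bar R) :
  measurable_fun setT h -> (forall w, 0 <= h w) ->
  \int[torus_measure R (j + k)]_w h w =
  \int[torus_measure R j]_x \int[torus_measure R k]_t h (tjoin x t).
Proof.
elim: j h => [|i IH] g mg g0.
  by rewrite /= integral_dirac //= diracE mem_set // mul1e.
rewrite [RHS](_ : _ = \int[(@mu1 R \x torus_measure R i)%E]_x
  \int[torus_measure R k]_t g (tjoin (x : torus R i.+1) t)) //.
rewrite [LHS](fubini_tonelli1 _ mg g0) [RHS]fubini_tonelli1.
- apply: eq_integral => s _; apply: IH => //.
  exact: measurable_fun_pair2 mg.
- have mg' : measurable_fun setT (fun z : torus R i.+1 * torus R k => g (tjoin z.1 z.2)).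
    exact: measurableT_comp mg (@measurable_tjoin i.+1 k).
  exact: (measurable_fun_fubini_tonelli_F _ mg' (fun z => g0 _)).
- by move=> x; apply: integral_ge0.
Qed.

Section tonelli.
Variables (j k : nat) (h : torus R (j + k) -> \bar R).
Hypotheses (mh : measurable_fun setT h) (h0 : forall w, 0 <= h w).

Let mh_tjoin : measurable_fun setT (fun z : torus R j * torus R k => h (tjoin z.1 z.2)).
Proof. exact: measurableT_comp mh (@measurable_tjoin j k). Qed.

Lemma measurable_integral_tjoin :
  measurable_fun setT (fun t => \int[torus_measure R j]_x h (tjoin x t)).
Proof. exact: measurable_fun_fubini_tonelli_G _ mh_tjoin (fun z => h0 _). Qed.

Lemma tonelli_tjoin2 : \int[torus_measure R (j + k)]_w h w =
  \int[torus_measure R k]_t \int[torus_measure R j]_x h (tjoin x t).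
Proof.
rewrite tonelli_tjoin1 //.
rewrite -[LHS](fubini_tonelli1 _ mh_tjoin (fun z => h0 _)).
exact: fubini_tonelli2 _ mh_tjoin (fun z => h0 _).
Qed.

Lemma ae_integral_tjoin_lty : \int[torus_measure R (j + k)]_w h w < +oo ->
  {ae torus_measure R k, forall t, \int[torus_measure R j]_x h (tjoin x t) < +oo}.
Proof.
rewrite tonelli_tjoin2; apply: ae_lty_integral; first exact: measurable_integral_tjoin.
by move=> t; apply: integral_ge0.
Qed.

End tonelli.

End torus.

Section hat.
Variables (R : realType) (j k : nat).
Local Open Scope ereal_scope.

Lemma cmeasurable_hat (g : torus R (j + k) -> R[i]) : cmeasurable g -> cmeasurable (hat g).
Proof.
move=> [gr gi]; split.
- exact: measurable_Rintegral_section (measurableT_comp gr (@measurable_tjoin R j k)).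
- exact: measurable_Rintegral_section (measurableT_comp gi (@measurable_tjoin R j k)).
Qed.

Lemma ae_integral_cmod_tjoin_lty m a b (e : (a + b = m)%N) (g : torus R m -> R[i]) :
  cmeasurable g -> \int[torus_measure R m]_w (cmod (g w))%:E < +oo ->
  {ae torus_measure R b, forall s,
    \int[torus_measure R a]_z (cmod (g (Defs.tcast e (tjoin z s))))%:E < +oo}.
Proof.
move=> mg gfin.
apply: (@ae_integral_tjoin_lty R a b (fun w => (cmod (g (Defs.tcast e w)))%:E)).
- apply/measurable_EFinP.
  exact: measurableT_comp (measurable_cmod mg) (measurable_tcast e).
- by move=> w; rewrite lee_fin cmod_ge0.
- by rewrite -(integral_tcast e (fun w => (cmod (g w))%:E)).
Qed.

Lemma hatB_ae (g h : torus R (j + k) -> R[i]) : cmeasurable g -> cmeasurable h ->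
  \int[torus_measure R (j + k)]_w (cmod (g w))%:E < +oo ->
  \int[torus_measure R (j + k)]_w (cmod (h w))%:E < +oo ->
  {ae torus_measure R k, forall t, hat (fun w => g w - h w)%R t = (hat g t - hat h t)%R}.
Proof.
move=> mg mh gfin hfin.
have := ae_integral_cmod_tjoin_lty erefl mg gfin.
have := ae_integral_cmod_tjoin_lty erefl mh hfin.
apply: filterS2 => t ht gt; apply: cintegralB => //.
- exact: cmeasurable_comp mg (measurable_tjoinl t).
- exact: cmeasurable_comp mh (measurable_tjoinl t).
Qed.

Lemma cLnorm_hat_le p (g : torus R (j + k) -> R[i]) : (1 <= p)%R -> cmeasurable g ->
  cLnorm (torus_measure R k) p (hat g) <= 2%:E * cLnorm (torus_measure R (j + k)) p g.
Proof.
move=> p1 mg; have p0 : (0 < p)%R by rewrite (lt_le_trans ltr01).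
have mgp := measurable_cmod_poweR p mg.
have mint := measurable_integral_tjoin mgp (fun w => poweR_ge0 _ _).
apply: cLnorm_le_of_integral_powR => //.
rewrite tonelli_tjoin2 //; last by move=> w; exact: poweR_ge0.
rewrite -ge0_integralZl //; last 2 first.
- by move=> t _; apply: integral_ge0 => x _; exact: poweR_ge0.
- exact: poweR_ge0.
apply: ge0_le_integral => //.
- by move=> t _; exact: poweR_ge0.
- exact: measurable_cmod_poweR p (cmeasurable_hat mg).
- exact: measurable_funeM.
move=> t _; have mgt := cmeasurable_comp mg (measurable_tjoinl t).
rewrite -(poweR_Lnorm _ _ (lt0r_neq0 p0)) -poweRM ?Lnorm_ge0 //.
apply: ge0_lee_poweR; [exact: ltW|exact: abse_ge0|].
by rewrite gee0_abs ?lee_fin ?cmod_ge0 //; exact: cmod_cintegral_le_cLnorm.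
Qed.

Lemma inLp_hat p (g : torus R (j + k) -> R[i]) : (1 <= p)%R ->
  inLp (torus_measure R (j + k)) p g -> inLp (torus_measure R k) p (hat g).
Proof.
move=> p1 [mg gfin]; split; first exact: cmeasurable_hat.
by apply: le_lt_trans (cLnorm_hat_le p1 mg) _; rewrite lte_mul_pinfty.
Qed.

Lemma Lp_cvg_hat p (g_ : nat -> torus R (j + k) -> R[i]) g : (1 <= p)%R ->
  (forall n, cmeasurable (g_ n)) -> cmeasurable g ->
  (forall n, \int[torus_measure R (j + k)]_w (cmod (g_ n w))%:E < +oo) ->
  \int[torus_measure R (j + k)]_w (cmod (g w))%:E < +oo ->
  Lp_cvg (torus_measure R (j + k)) p g_ g ->
  Lp_cvg (torus_measure R k) p (fun n => hat (g_ n)) (hat g).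
Proof.
move=> p1 mg_ mg gfin_ gfin; apply: Lp_cvg_of_cLnorm_le => n.
have mB := cmeasurableB (mg_ n) mg.
rewrite -(ae_eq_cLnorm _ (cmeasurable_hat mB)
  (cmeasurableB (cmeasurable_hat (mg_ n)) (cmeasurable_hat mg))
  (hatB_ae (mg_ n) mg (gfin_ n) gfin)).
exact: cLnorm_hat_le p1 mB.
Qed.

End hat.

Lemma hat_section (R : realType) j a b k
    (e : (a + b = k)%N) (e' : (j + a + b = j + k)%N)
    (g : torus R (j + k) -> R[i]) (s : torus R b) :
  (fun y => hat g (Defs.tcast e (tjoin y s))) =
  hat (fun z : torus R (j + a) => g (Defs.tcast e' (tjoin z s))).
Proof.
apply/funext => y; rewrite /hat; congr cintegral; apply/funext => x.
by rewrite (tjoin_tcast e e').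
Qed.

Lemma ae_Lp_cvg_hat_section (R : realType) j k p
    (f_ : nat -> torus R (j + k) -> R[i]) f a b (e : (a + b = k)%N) :
  (1 <= p)%R -> (1 <= a)%N -> (1 <= b)%N -> restr_cvg p f_ f ->
  {ae torus_measure R b, forall s, Lp_cvg (torus_measure R a) p
    (fun n y => hat (f_ n) (Defs.tcast e (tjoin y s)))
    (fun y => hat f (Defs.tcast e (tjoin y s)))}.
Proof.
move=> p1 a1 b1 [f2 fp _ fsec].
have e' : (j + a + b = j + k)%N by rewrite -addnA e.
have p12 : (1 <= 2 :> R)%R by rewrite ler1n.
have L1n n := integral_cmod_lty p12 (f2 n).
have L1f := integral_cmod_lty p1 fp.
have := fsec (j + a)%N b e' (leq_trans a1 (leq_addl _ _)) b1.
have := ae_integral_cmod_tjoin_lty e' fp.1 L1f.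
have := ae_foralln (fun n => ae_integral_cmod_tjoin_lty e' (f2 n).1 (L1n n)).
apply: filterS3 => s fin_n fin cvg_s.
have ms (g : torus R (j + k) -> R[i]) :
    cmeasurable g -> cmeasurable (fun z => g (Defs.tcast e' (tjoin z s))).
  move=> mg; apply: cmeasurable_comp mg _.
  exact: measurableT_comp (measurable_tcast e') (measurable_tjoinl s).
rewrite (hat_section e e' f) (_ : (fun n y => _) =
  fun n => hat (fun z => f_ n (Defs.tcast e' (tjoin z s)))); last first.
  by apply/funext => n; exact: hat_section.
exact: Lp_cvg_hat p1 (fun n => ms _ (f2 n).1) (ms _ fp.1) fin_n fin cvg_s.
Qed.

Theorem lemma7p2 (R : realType) (j k : nat) (p : R)
  (hj : (1 <= j)%N) (hk : (1 <= k)%N) (hp : 1 <= p)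
  (f_ : nat -> torus R (j + k) -> R[i]) (f : torus R (j + k) -> R[i]) :
  restr_cvg p f_ f ->
  restr_cvg p (fun n => hat (f_ n)) (hat f).
Proof.
move=> fcvg; have [f2 fp fLp _] := fcvg.
have p12 : (1 <= 2 :> R)%R by rewrite ler1n.
split.
- by move=> n; exact: inLp_hat p12 (f2 n).
- exact: inLp_hat hp fp.
- apply: Lp_cvg_hat hp _ fp.1 _ (integral_cmod_lty hp fp) fLp => n.
  + exact: (f2 n).1.
  + exact: integral_cmod_lty p12 (f2 n).
- by move=> a b e a1 b1; exact: ae_Lp_cvg_hat_section.
Qed.
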